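(* Let $M$ be an $A\mathcal{V}$-module with representation $\rho:\mathcal{V}\to\mathfrak{gl}(M)$ and let $s\ge0$. Then $\rho\in\mathrm{Diff}_s(\mathcal{V},\mathrm{End}_\Bbbk(M))$ (i.e. $M$ is $s$-differentiable) if and only if $\mathfrak{m}^s\mathcal{L}_+$ annihilates $M$, where $\mathcal{L}_+$ acts on $M$ by $X^m\frac{\partial}{\partial X_p}\cdot v=\sum_{0\le k\le m}(-1)^{|k|}\binom{m}{k}x^k\rho\!\left(x^{m-k}\frac{\partial}{\partial x_p}\right)v$.
   Context: $\Bbbk$ algebraically closed, characteristic $0$; $A=\Bbbk[x_1,\dots,x_n]$; $\mathcal{V}=\mathrm{Der}(A)$. An $A\mathcal{V}$-module is an $A$-module and $\mathcal{V}$-module $M$ with $\eta(fm)=\eta(f)m+f(\eta m)$; $\rho$ is the action map of $\mathcal{V}$. $\mathcal{L}=\mathrm{Der}(\Bbbk[X_1,\dots,X_n])$, $\mathfrak{m}=(X_1,\dots,X_n)\subset\Bbbk[X_1,\dots,X_n]$, $\mathcal{L}_+=\mathfrak{m}\mathcal{L}$, so $\mathfrak{m}^s\mathcal{L}_+$ is spanned by $X^k\partial/\partial X_i$ with $|k|\ge s+1$; the stated formula (multi-index notation, $\binom{m}{k}=\prod\binom{m_i}{k_i}$) defines an $\mathcal{L}_+$-action commuting with that of the Weyl algebra, coming from an isomorphism $A\#U(\mathcal{V})\cong\mathcal{D}\otimes U(\mathcal{L}_+)$. Differential operators: for a commutative $\Bbbk$-algebra $R$ and $R$-modules $M',N'$,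 $\delta(f)D=D\circ f-f\circ D$ on $\mathrm{Hom}_\Bbbk(M',N')$; $\mathrm{Diff}_{-1}=0$, $\mathrm{Diff}_{s+1}(M',N')=\{D:\delta(f)D\in\mathrm{Diff}_s(M',N')\ \forall f\in R\}$; thus $D\in\mathrm{Diff}_s$ iff $\delta(f_1)\cdots\delta(f_{s+1})D=0$ for all $f_i$. Here $R=A$, $\mathcal{V}$ is an $A$-module via $(f\eta)(g)=f\eta(g)$, and $\mathrm{End}_\Bbbk(M)$ is an $A$-module via $f\cdot T=f\circ T$, so $(\delta(f)\rho)(\eta)=\rho(f\eta)-f\circ\rho(\eta)$. $M$ is called $s$-differentiable if $\rho\in\mathrm{Diff}_s(\mathcal{V},\mathrm{End}_\Bbbk(M))$. *)

From HB Require Import structures.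
From mathcomp Require Import all_boot all_order all_algebra.
From mathcomp Require Import mpoly.
Set Implicit Arguments. Unset Strict Implicit. Unset Printing Implicit Defensive.
Import Order.TTheory GRing.Theory.
Local Open Scope ring_scope.

Section AV.
Variables (K : fieldType) (n : nat).

Definition Apoly := {mpoly K[n]}.

(* V = Der(A) = (+)_i A d/dx_i ; a vector field eta = sum_i eta_i d/dx_i
   is stored as the row vector of its coefficients (eta_i)_i. *)
Definition VF := 'rV[{mpoly K[n]}]_n.

Definition vf_apply (eta : VF) (g : {mpoly K[n]}) : {mpoly K[n]} :=
  \sum_(i < n) eta 0 i * mderiv i g.

Definition vf_bracket (eta zeta : VF) : VF :=
  \row_(i < n) (vf_apply eta (zeta 0 i) - vf_apply zeta (eta 0 i)).

Definition vf_basis (f : {mpoly K[n]}) (p : 'I_n) : VF :=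
  \row_(i < n) (if i == p then f else 0).

Variable (M : lmodType K).

Record AVmodule (act : {mpoly K[n]} -> M -> M) (rho : VF -> M -> M) : Prop := {
  act_addl : forall f g m, act (f + g) m = act f m + act g m;
  act_linr : forall f c m m', act f (c *: m + m') = c *: act f m + act f m';
  act_mul  : forall f g m, act (f * g) m = act f (act g m);
  act_const : forall c m, act (c%:MP) m = c *: m;
  rho_add : forall eta zeta m, rho (eta + zeta) m = rho eta m + rho zeta m;
  rho_scale : forall c eta m, rho (c%:MP *: eta) m = c *: rho eta m;
  rho_linr : forall eta c m m', rho eta (c *: m + m') = c *: rho eta m + rho eta m';
  rho_bracket : forall eta zeta m,
      rho (vf_bracket eta zeta) m = rho eta (rho zeta m) - rho zeta (rho eta m);
  rho_leibniz : forall eta f m,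
      rho eta (act f m) = act (vf_apply eta f) m + act f (rho eta m)
}.

Definition diff_delta (act : {mpoly K[n]} -> M -> M) (f : {mpoly K[n]})
  (D : VF -> M -> M) : VF -> M -> M :=
  fun eta m => D (f *: eta) m - act f (D eta m).

(* DiffShift act k D  <->  D \in Diff_{k-1}(V, End_K(M)) :
   Diff_{-1} = 0, Diff_{s+1} = {D | forall f, delta(f) D \in Diff_s}. *)
Fixpoint DiffShift (act : {mpoly K[n]} -> M -> M) (k : nat)
  (D : VF -> M -> M) : Prop :=
  match k with
  | 0 => forall eta m, D eta m = 0
  | k'.+1 => forall f, DiffShift act k' (diff_delta act f D)
  end.

Definition Diff (act : {mpoly K[n]} -> M -> M) (s : nat) (D : VF -> M -> M) :=
  DiffShift act s.+1 D.

Definition Lplus_act (act : {mpoly K[n]} -> M -> M) (rho : VF -> M -> M)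
  (m : 'X_{1..n}) (p : 'I_n) (v : M) : M :=
  \sum_(k : 'X_{1..n < (mdeg m).+1} | (k <= m)%MM)
     (((-1) ^+ mdeg k * (\prod_(i < n) 'C(m i, k i))%:R) : K) *:
       act 'X_[(k : 'X_{1..n})]
           (rho (vf_basis 'X_[(m - k)%MM] p) v).

(* m^s L_+ (spanned by X^m d/dX_p with |m| >= s+1) annihilates M *)
Definition annihilated_by_ms_Lplus (act : {mpoly K[n]} -> M -> M)
  (rho : VF -> M -> M) (s : nat) : Prop :=
  forall (m : 'X_{1..n}) (p : 'I_n) (v : M),
    (s.+1 <= mdeg m)%N -> Lplus_act act rho m p v = 0.

End AV.

From HB Require Import structures.
From mathcomp Require Import all_boot all_order all_algebra.
From mathcomp Require Import mpoly.
From mathcomp Require Import zify.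
From Stdlib Require Import FunctionalExtensionality.
Set Implicit Arguments. Unset Strict Implicit. Unset Printing Implicit Defensive.
Import Order.TTheory GRing.Theory.
Local Open Scope ring_scope.

(* The operators δ(f) commute and satisfy δ(fg) D = δ(f) (D ∘ g) + f δ(g) D, so a
   K-linear D : V -> End M lies in Diff_s iff every product
   δ(x_j0) ⋯ δ(x_js) D vanishes, and it suffices to test these products on the
   fields ∂/∂x_p.  Let a polynomial Σ_b c_b Y^b in new variables Y with
   coefficients in A act as η ↦ Σ_b c_b D(x^b η); multiplication by Y_j - x_j
   then acts as δ(x_j).  Hence δ(x_j1) ⋯ δ(x_jk) D (∂/∂x_p) is the action of
   ∏_j (Y_j - x_j)^(m_j) with m = e_j1 + ⋯ + e_jk, and the binomial theorem
   expands this product into the formula defining X^m ∂/∂X_p. *)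

Section MultinomialOfSeq.
Variable n : nat.

Definition mnm_of_seq (l : seq 'I_n) : 'X_{1..n} := (\sum_(j <- l) U_(j))%MM.

Lemma mnm_of_seq_rcons l j : mnm_of_seq (rcons l j) = (mnm_of_seq l + U_(j))%MM.
Proof. by rewrite /mnm_of_seq big_rcons. Qed.

Lemma mdeg_mnm_of_seq l : mdeg (mnm_of_seq l) = size l.
Proof. by rewrite /mnm_of_seq mdeg_sum (eq_bigr _ (fun j _ => mdeg1 j)) sum1_size. Qed.

Lemma mnm_of_seq_surj (m : 'X_{1..n}) : exists l, mnm_of_seq l = m.
Proof.
suff [l ml]: exists l, mnm_of_seq l = (\sum_i U_(i) *+ m i)%MM.
  by exists l; rewrite ml -multinomUE_id.
elim/big_rec: _ => [|i m' _ [l <-]]; first by exists [::]; rewrite /mnm_of_seq big_nil.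
exists (nseq (m i) i ++ l); rewrite /mnm_of_seq big_cat; congr (_ + _)%MM.
by elim: (m i) => [|k IHk]; rewrite ?big_nil ?mulm0n //= big_cons IHk mulmS.
Qed.

Lemma mpolyX_mnm_of_seq (R : nzRingType) l :
  'X_[mnm_of_seq l] = \prod_(j <- l) 'X_j :> {mpoly R[n]}.
Proof. exact: (big_morph _ (@mpolyXD _ _) (@mpolyX0 _ _)). Qed.

End MultinomialOfSeq.

Lemma mpoly_ind_mulX (R : nzRingType) (n : nat) (Q : {mpoly R[n]} -> Prop) :
  Q 1 -> (forall j g, Q g -> Q ('X_j * g)) ->
  (forall g h, Q g -> Q h -> Q (g + h)) -> (forall c g, Q g -> Q (c *: g)) ->
  forall g, Q g.
Proof.
move=> Q1 QX QD QZ; elim/mpolyind => [|c m p _ _ Qp].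
  by rewrite -(scale0r 1); apply: QZ.
apply: QD Qp; apply: QZ; have [l <-] := mnm_of_seq_surj m.
by rewrite mpolyX_mnm_of_seq; elim: l => [|j l IHl]; rewrite ?big_nil ?big_cons //; apply: QX.
Qed.

Section ShiftedBinomial.
Variables (R : comNzRingType) (n : nat).
Implicit Types (m b d : 'X_{1..n}) (j : 'I_n).

Definition binprod m b : nat := \prod_(i < n) 'C(m i, b i).

Lemma binprod_split m b j :
  binprod m b = ('C(m j, b j) * \prod_(i < n | i != j) 'C(m i, b i))%N.
Proof. exact: bigD1. Qed.

Lemma binprod_eq0 m b : ~~ (b <= m)%MM -> binprod m b = 0%N.
Proof.
move=> bNm; have [i mb] : exists i, (m i < b i)%N.
  apply/existsP; apply: contraR bNm; rewrite negb_exists => /forallP mb.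
  by apply/mnm_lepP => i; rewrite leqNgt mb.
by rewrite (binprod_split _ _ i) bin_small.
Qed.

Lemma binprod_subr m b : (b <= m)%MM -> binprod m (m - b) = binprod m b.
Proof. by move/mnm_lepP => bm; apply: eq_bigr => i _; rewrite mnmBE bin_sub. Qed.

Lemma binprod_addU0 m b j : b j = 0%N -> binprod (m + U_(j)) b = binprod m b.
Proof.
move=> bj0; apply: eq_bigr => i _; rewrite mnmDE mnm1E.
by case: eqP => [<-|_]; rewrite ?bj0 ?bin0 ?addn0.
Qed.

Lemma binprod_addU m b j :
  binprod (m + U_(j)) (b + U_(j)) = (binprod m b + binprod m (b + U_(j)))%N.
Proof.
rewrite !(binprod_split _ _ j) !mnmDE !mnm1E eqxx !addn1 binS mulnDl [RHS]addnC.
by congr (_ * _ + _ * _)%N; apply: eq_bigr => i ij; rewrite !mnmDE mnm1E eq_sym (negbTE ij) !addn0.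
Qed.

Definition signed_monomial (N : nat) d : {mpoly R[n]} :=
  ((-1) ^+ mdeg d * N%:R) *: 'X_[d].

Lemma signed_monomialD N1 N2 d :
  signed_monomial (N1 + N2) d = signed_monomial N1 d + signed_monomial N2 d.
Proof. by rewrite /signed_monomial natrD mulrDr scalerDl. Qed.

Lemma signed_monomial_addU N d j :
  signed_monomial N (d + U_(j)) = - ('X_j * signed_monomial N d).
Proof.
rewrite /signed_monomial mdegD mdeg1 addn1 exprS mulN1r mulNr scaleNr mpolyXD.
by rewrite [_ * 'X_j]mulrC scalerAr.
Qed.

(* Y^(m-k) carries the field part x^(m-k) ∂/∂x_p of the k-th term of the
   action of X^m ∂/∂X_p; the polynomial is ∏_j (Y_j - x_j)^(m_j). *)
Definition lplus_poly m : {mpoly {mpoly R[n]}[n]} :=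
  \sum_(k : 'X_{1..n < (mdeg m).+1} | (k <= m)%MM)
     (signed_monomial (binprod m k) k)%:MP * 'X_[m - k].

Lemma subKm m b : (b <= m)%MM -> (m - (m - b))%MM = b.
Proof. by move/mnm_lepP => bm; apply/mnmP => i; rewrite !mnmBE subKn. Qed.

Lemma lplus_poly_coef m b :
  (lplus_poly m)@_b = signed_monomial (binprod m b) (m - b).
Proof.
rewrite /lplus_poly raddf_sum /=; under eq_bigr do rewrite mcoeffCM mcoeffX.
have [bm|bNm] := boolP (b <= m)%MM; last first.
  rewrite /signed_monomial binprod_eq0 // mulr0 scale0r big1 // => k km.
  by case: eqP => [mkb|_]; [rewrite -mkb lem_subr in bNm | rewrite mulr0].
have km : (mdeg (m - b) < (mdeg m).+1)%N by rewrite ltnS mdegB.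
rewrite (bigD1 (Sub (m - b)%MM km)) /= ?lem_subr // subKm // eqxx mulr1.
rewrite binprod_subr // big1 ?addr0 // => k /andP [km' kNb].
case: eqP => [mkb|_]; last by rewrite mulr0.
by case/eqP: kNb; apply: val_inj; rewrite /= -mkb subKm.
Qed.

Lemma lplus_poly_addU m j :
  lplus_poly (m + U_(j)) = lplus_poly m * ('X_j - ('X_j)%:MP).
Proof.
apply/mpolyP => b; rewrite mulrBr mcoeffB [_ * _%:MP]mulrC mcoeffCM !lplus_poly_coef.
have [bj0|bj] := eqVneq (b j) 0%N.
  have -> : (lplus_poly m * 'X_j)@_b = 0.
    apply: memN_msupp_eq0; rewrite (perm_mem (msuppMX _ _)).
    by apply/mapP => -[b' _ eb]; move: bj0; rewrite eb mnmDE mnm1E eqxx.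
  have -> : (m + U_(j) - b = m - b + U_(j))%MM.
    by apply/mnmP => i; rewrite !mnmE; case: eqP => [<-|_]; rewrite ?bj0 ?subn0 ?addn0.
  by rewrite sub0r binprod_addU0 // signed_monomial_addU.
have Ujb : (U_(j) <= b)%MM by rewrite lep1mP.
have -> : (lplus_poly m * 'X_j)@_b = (lplus_poly m)@_(b - U_(j)).
  by rewrite -{1}(submK Ujb) addmC mcoeffMX.
rewrite lplus_poly_coef; move: (submK Ujb); set b' := (b - U_(j))%MM => <-.
have -> : (m + U_(j) - (b' + U_(j)) = m - b')%MM by apply/mnmP => i; rewrite !mnmE subnDr.
rewrite binprod_addU signed_monomialD; congr (_ + _).
have [bm|bNm] := boolP (b' + U_(j) <= m)%MM; last first.
  by rewrite /signed_monomial binprod_eq0 // !mulr0 !scale0r mulr0 oppr0.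
have -> : (m - b' = m - (b' + U_(j)) + U_(j))%MM.
  by apply/mnmP => i; move/mnm_lepP/(_ i): bm; rewrite !mnmE; case: eqP => _; lia.
by rewrite signed_monomial_addU.
Qed.

Lemma lplus_poly0 : lplus_poly 0%MM = 1.
Proof.
apply/mpolyP => b; rewrite lplus_poly_coef mcoeff1 /signed_monomial sub0m mdeg0 mul1r mpolyX0.
have [->|bN0] := eqVneq b 0%MM.
  by rewrite /binprod big1 ?scale1r // => i _; rewrite mnm0E bin0.
rewrite binprod_eq0 ?scale0r //; apply: contra bN0 => /mnm_lepP b0.
by apply/eqP/mnmP => i; have := b0 i; rewrite !mnm0E leqn0 => /eqP.
Qed.

End ShiftedBinomial.

Section VectorFieldBasis.
Variables (K : fieldType) (n : nat).

Lemma vf_basisM (f g : {mpoly K[n]}) p : vf_basis (f * g) p = f *: vf_basis g p.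
Proof. by apply/rowP => i; rewrite !mxE; case: eqP; rewrite ?mulr0. Qed.

Lemma vf_basisD (f g : {mpoly K[n]}) p : vf_basis (f + g) p = vf_basis f p + vf_basis g p.
Proof. by apply/rowP => i; rewrite !mxE; case: eqP; rewrite ?addr0. Qed.

Lemma vf_sum_basis (eta : VF K n) : eta = \sum_(p < n) vf_basis (eta 0 p) p.
Proof.
apply/rowP => i; rewrite summxE (bigD1 i) //= big1 ?addr0 => [|j /negbTE ji].
  by rewrite !mxE eqxx.
by rewrite !mxE eq_sym ji.
Qed.

End VectorFieldBasis.

Section DifferentialOperators.
Variables (K : fieldType) (n : nat) (M : lmodType K).
Variable act : {mpoly K[n]} -> M -> M.
Hypothesis actDl : forall f g v, act (f + g) v = act f v + act g v.
Hypothesis act_linear : forall f c v w, act f (c *: v + w) = c *: act f v + act f w.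
Hypothesis actM : forall f g v, act (f * g) v = act f (act g v).
Hypothesis act_mpolyC : forall c v, act c%:MP v = c *: v.

Local Notation A := {mpoly K[n]}.
Local Notation Op := (VF K n -> M -> M).
Local Notation delta := (diff_delta act).

Lemma actDr f v w : act f (v + w) = act f v + act f w.
Proof. by have := act_linear f 1 v w; rewrite !scale1r. Qed.

Lemma act0r f : act f 0 = 0.
Proof. by apply: (addrI (act f 0)); rewrite -actDr !addr0. Qed.

Lemma actZr f c v : act f (c *: v) = c *: act f v.
Proof. by rewrite -[c *: v]addr0 act_linear act0r addr0. Qed.

Lemma actBr f v w : act f (v - w) = act f v - act f w.
Proof. by rewrite actDr -scaleN1r actZr scaleN1r. Qed.

Lemma act0l v : act 0 v = 0.
Proof. by apply: (addrI (act 0 v)); rewrite -actDl !addr0. Qed.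

Lemma act1 v : act 1 v = v.
Proof. by rewrite -mpolyC1 act_mpolyC scale1r. Qed.

Lemma actZl c f v : act (c *: f) v = c *: act f v.
Proof. by rewrite -mul_mpolyC actM act_mpolyC. Qed.

Lemma act_comm f g v : act f (act g v) = act g (act f v).
Proof. by rewrite -!actM mulrC. Qed.

Lemma act_sumr (I : Type) (r : seq I) (F : I -> M) f :
  act f (\sum_(i <- r) F i) = \sum_(i <- r) act f (F i).
Proof. exact: (big_morph _ (actDr f) (act0r f)). Qed.

Definition deltas (l : seq A) (D : Op) : Op := foldl (fun D f => delta f D) D l.

Lemma delta_comm f g D : delta f (delta g D) = delta g (delta f D).
Proof.
apply: functional_extensionality => eta; apply: functional_extensionality => v.
rewrite /diff_delta !actBr !scalerA (mulrC f g) (act_comm f g).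
set a := D _ _; set d := act g (act f _).
by rewrite !opprB !addrA !(addrAC _ d) (addrAC a).
Qed.

Lemma deltas_delta l f D : deltas l (delta f D) = delta f (deltas l D).
Proof. by elim: l D => //= g l IHl D; rewrite -IHl delta_comm. Qed.

Lemma deltas_rcons l f D : deltas (rcons l f) D = delta f (deltas l D).
Proof. by rewrite /deltas foldl_rcons. Qed.

Lemma deltas_eq0 l D : (forall eta v, D eta v = 0) ->
  forall eta v, deltas l D eta v = 0.
Proof.
elim: l D => //= f l IHl D D0; apply: IHl => eta v.
by rewrite /diff_delta !D0 act0r subr0.
Qed.

Lemma DiffShift_deltas k D : DiffShift act k D ->
  forall l, (k <= size l)%N -> forall eta v, deltas l D eta v = 0.
Proof.
elim: k D => [|k IHk] D /= Dk l; first by move=> _; exact: deltas_eq0.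
by case: l => //= f l; apply: IHk.
Qed.

Definition vf_linear (D : Op) :=
  (forall eta zeta v, D (eta + zeta) v = D eta v + D zeta v) /\
  (forall c eta v, D (c%:MP *: eta) v = c *: D eta v).

Lemma vf_linear_delta f D : vf_linear D -> vf_linear (delta f D).
Proof.
case=> DD DZ; split=> [eta zeta v|c eta v]; rewrite /diff_delta.
  by rewrite scalerDr !DD actDr opprD addrACA.
by rewrite scalerA mulrC -scalerA !DZ actZr scalerBr.
Qed.

Lemma vf_linear_deltas l D : vf_linear D -> vf_linear (deltas l D).
Proof. by elim: l D => //= f l IHl D /(vf_linear_delta f); apply: IHl. Qed.

Lemma vf_linear_sum D (I : Type) (r : seq I) (F : I -> VF K n) v :
  vf_linear D -> D (\sum_(i <- r) F i) v = \sum_(i <- r) D (F i) v.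
Proof.
case=> DD _; apply: (big_morph (fun eta => D eta v)) => [eta zeta|]; first exact: DD.
by apply: (addrI (D 0 v)); rewrite -DD !addr0.
Qed.

Lemma delta_scale f D eta v : D (f *: eta) v = delta f D eta v + act f (D eta v).
Proof. by rewrite /diff_delta subrK. Qed.

Lemma delta_mul f g D eta v :
  delta (f * g) D eta v = delta f D (g *: eta) v + act f (delta g D eta v).
Proof. by rewrite /diff_delta -scalerA actBr actM addrA subrK. Qed.

Lemma delta_coord_eq0 E : vf_linear E ->
  (forall j eta v, delta 'X_j E eta v = 0) -> forall f eta v, delta f E eta v = 0.
Proof.
case=> ED EZ EX; elim/mpoly_ind_mulX => [|j g Eg|g h Eg Eh|c g Eg] eta v.
- by rewrite /diff_delta scale1r act1 subrr.
- by rewrite delta_mul EX Eg act0r addr0.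
- have := Eg eta v; have := Eh eta v; rewrite /diff_delta => Eh0 Eg0.
  by rewrite scalerDl ED actDl opprD addrACA Eg0 Eh0 addr0.
- have := Eg eta v; rewrite /diff_delta => Eg0.
  by rewrite -mul_mpolyC -scalerA EZ actM act_mpolyC -scalerBr Eg0 scaler0.
Qed.

Lemma DiffShift_coord k D : vf_linear D ->
  (forall l : seq 'I_n, (k <= size l)%N ->
     forall eta v, deltas [seq 'X_j | j <- l] D eta v = 0) ->
  DiffShift act k D.
Proof.
elim: k D => [|k IHk] D linD Dk /=; first by move=> eta v; apply: (Dk [::]).
move=> f; apply: IHk => [|l kl eta v]; first exact: vf_linear_delta.
rewrite deltas_delta; apply: delta_coord_eq0 => [|j eta' v']; first exact: vf_linear_deltas.
by rewrite -deltas_rcons -map_rcons Dk // size_rcons.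
Qed.

Lemma deltas_coord_basis s D : vf_linear D ->
  (forall l : seq 'I_n, (s <= size l)%N ->
     forall p v, deltas [seq 'X_j | j <- l] D (vf_basis 1 p) v = 0) ->
  forall l : seq 'I_n, (s <= size l)%N ->
     forall eta v, deltas [seq 'X_j | j <- l] D eta v = 0.
Proof.
move=> linD D1.
suff Dg g l : (s <= size l)%N -> forall p v, deltas [seq 'X_j | j <- l] D (vf_basis g p) v = 0.
  move=> l sl eta v; rewrite [eta]vf_sum_basis vf_linear_sum; last exact: vf_linear_deltas.
  by rewrite big1 // => p _; apply: Dg.
elim/mpoly_ind_mulX: g l => [|j g Dg|g h Dg Dh|c g Dg] l sl p v.
- exact: D1.
- rewrite vf_basisM delta_scale -deltas_rcons -map_rcons !Dg ?act0r ?addr0 //.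
  by rewrite size_rcons ltnW.
- by rewrite vf_basisD (vf_linear_deltas _ linD).1 Dg ?Dh ?addr0.
- by rewrite -mul_mpolyC vf_basisM (vf_linear_deltas _ linD).2 Dg ?scaler0.
Qed.

Lemma Diff_coordP s D : vf_linear D ->
  Diff act s D <-> forall l : seq 'I_n, (s < size l)%N ->
     forall p v, deltas [seq 'X_j | j <- l] D (vf_basis 1 p) v = 0.
Proof.
move=> linD; split=> [Ds l sl p v | D1].
  by apply: (DiffShift_deltas Ds); rewrite size_map.
by apply: DiffShift_coord => //; apply: deltas_coord_basis.
Qed.

Local Notation A2 := {mpoly {mpoly K[n]}[n]}.

Definition eval_op (D : Op) (eta : VF K n) (v : M) (c : A2) : M :=
  \sum_(b <- msupp c) act c@_b (D ('X_[b] *: eta) v).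

Lemma eval_op_supp D eta v c (s : seq 'X_{1..n}) : uniq s -> {subset msupp c <= s} ->
  eval_op D eta v c = \sum_(b <- s) act c@_b (D ('X_[b] *: eta) v).
Proof.
move=> us cs; rewrite (bigID (mem (msupp c))) /= [X in _ + X]big1 ?addr0; last first.
  by move=> b /memN_msupp_eq0 ->; rewrite act0l.
rewrite -big_filter; apply: perm_big; apply: uniq_perm; rewrite ?filter_uniq //.
by move=> b; rewrite mem_filter andb_idr //; apply: cs.
Qed.

Lemma eval_opD D eta v c c' :
  eval_op D eta v (c + c') = eval_op D eta v c + eval_op D eta v c'.
Proof.
rewrite !(@eval_op_supp _ _ _ _ (undup (msupp c ++ msupp c'))) ?undup_uniq //.
- by rewrite -big_split; apply: eq_bigr => b _; rewrite mcoeffD actDl.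
- by move=> b cb; rewrite mem_undup mem_cat cb orbT.
- by move=> b cb; rewrite mem_undup mem_cat cb.
- by move=> b /msuppD_le; rewrite mem_undup.
Qed.

Lemma eval_op0 D eta v : eval_op D eta v 0 = 0.
Proof. by rewrite /eval_op msupp0 big_nil. Qed.

Lemma eval_opB D eta v c c' :
  eval_op D eta v (c - c') = eval_op D eta v c - eval_op D eta v c'.
Proof. by apply/eqP; rewrite eq_sym subr_eq -eval_opD subrK. Qed.

Lemma eval_op_sum D eta v (I : Type) (r : seq I) (P : pred I) (F : I -> A2) :
  eval_op D eta v (\sum_(i <- r | P i) F i) = \sum_(i <- r | P i) eval_op D eta v (F i).
Proof. exact: (big_morph _ (eval_opD D eta v) (eval_op0 D eta v)). Qed.

Lemma eval_opCX D eta v (a : A) b :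
  eval_op D eta v (a%:MP * 'X_[b]) = act a (D ('X_[b] *: eta) v).
Proof.
rewrite (@eval_op_supp _ _ _ _ [:: b]) // ?big_seq1 ?mcoeffCM ?mcoeffX ?eqxx ?mulr1 //.
by move=> b'; rewrite mul_mpolyC => /msuppZ_le; rewrite msuppX.
Qed.

Lemma eval_op1 D eta v : eval_op D eta v 1 = D eta v.
Proof.
have -> : 1 = (1 : A)%:MP * 'X_[0] :> A2 by rewrite mpolyX0 mulr1.
by rewrite eval_opCX mpolyX0 act1 scale1r.
Qed.

Lemma eval_op_mulX D eta v c j :
  eval_op D eta v (c * 'X_j) = eval_op D ('X_j *: eta) v c.
Proof.
rewrite (@eval_op_supp _ _ _ _ [seq (U_(j) + b)%MM | b <- msupp c]).
- by rewrite big_map; apply: eq_bigr => b _; rewrite mcoeffMX mpolyXD scalerA mulrC.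
- by rewrite map_inj_uniq //; apply: addmI.
- by move=> b; rewrite (perm_mem (msuppMX _ _)).
Qed.

Lemma eval_op_mulC D eta v c (a : A) :
  eval_op D eta v (c * a%:MP) = act a (eval_op D eta v c).
Proof.
rewrite [RHS]act_sumr (@eval_op_supp _ _ _ _ (msupp c)) //.
  by apply: eq_bigr => b _; rewrite mulrC mcoeffCM actM.
by move=> b; rewrite !mcoeff_msupp mulrC mcoeffCM; apply: contra => /eqP ->; rewrite mulr0.
Qed.

Lemma eval_op_deltas (l : seq 'I_n) D eta v :
  eval_op D eta v (\prod_(j <- l) ('X_j - ('X_j)%:MP)) = deltas [seq 'X_j | j <- l] D eta v.
Proof.
elim/last_ind: l eta v => [|l j IHl] eta v; first by rewrite big_nil eval_op1.
by rewrite big_rcons /= mulrBr eval_opB eval_op_mulX eval_op_mulC !IHl map_rcons deltas_rcons.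
Qed.

Lemma lplus_poly_mnm_of_seq (l : seq 'I_n) :
  lplus_poly K (mnm_of_seq l) = \prod_(j <- l) ('X_j - ('X_j)%:MP).
Proof.
elim/last_ind: l => [|l j IHl]; last by rewrite mnm_of_seq_rcons lplus_poly_addU IHl big_rcons.
by rewrite /mnm_of_seq !big_nil lplus_poly0.
Qed.

Lemma Lplus_act_eval_op D m p v :
  Lplus_act act D m p v = eval_op D (vf_basis 1 p) v (lplus_poly K m).
Proof.
rewrite /Lplus_act /lplus_poly eval_op_sum; apply: eq_bigr => k _.
by rewrite eval_opCX actZl -vf_basisM mulr1.
Qed.

Lemma Lplus_act_mnm_of_seq D l p v :
  Lplus_act act D (mnm_of_seq l) p v = deltas [seq 'X_j | j <- l] D (vf_basis 1 p) v.
Proof. by rewrite Lplus_act_eval_op lplus_poly_mnm_of_seq eval_op_deltas. Qed.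

Lemma annihilated_coordP D s :
  annihilated_by_ms_Lplus act D s <-> forall l : seq 'I_n, (s < size l)%N ->
     forall p v, deltas [seq 'X_j | j <- l] D (vf_basis 1 p) v = 0.
Proof.
split=> [DL l sl p v | D1 m p v sm].
  by rewrite -Lplus_act_mnm_of_seq DL // mdeg_mnm_of_seq.
have [l ml] := mnm_of_seq_surj m.
by rewrite -ml Lplus_act_mnm_of_seq D1 // -mdeg_mnm_of_seq ml.
Qed.

End DifferentialOperators.

Theorem lemma4p2 (K : closedFieldType) (charK0 : [pchar K] =i pred0)
  (n : nat) (M : lmodType K)
  (act : {mpoly K[n]} -> M -> M) (rho : VF K n -> M -> M)
  (HAV : AVmodule act rho) (s : nat) :
  Diff act s rho <-> annihilated_by_ms_Lplus act rho s.
Proof.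
have rho_linear : vf_linear rho := conj (rho_add HAV) (rho_scale HAV).
move: (act_addl HAV) (act_linr HAV) (act_mul HAV) (act_const HAV) => aD aL aM aC.
exact: iff_trans (Diff_coordP aD aL aM aC s rho_linear)
                 (iff_sym (annihilated_coordP aD aL aM aC rho s)).
Qed.
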